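(* Let $E$ be a free $A_n(K)$-module with basis $e_1,\dots,e_m$, let $N$ be an $A_n(K)$-submodule of $E$, and let $G=\{g_1,\dots,g_r\}$ be an $(x,\partial)$-Gröbner basis of $N$. Then: (i) for $f\in E$, $f\in N$ if and only if $f$ $(x,\partial)$-reduces to $0$ modulo $G$; (ii) if $f\in N$ and $f$ is $(x,\partial)$-reduced with respect to $G$, then $f=0$.
   Context: $K$ is a field of characteristic zero and $A_n(K)$ is the Weyl algebra: the $K$-algebra generated by $x_1,\dots,x_n,\partial_1,\dots,\partial_n$ in which all pairs of generators commute except that $\partial_ix_i=x_i\partial_i+1$. $\Theta$ denotes the set of monomials $x^\alpha\partial^\beta=x_1^{\alpha_1}\cdots x_n^{\alpha_n}\partial_1^{\beta_1}\cdots\partial_n^{\beta_n}$ ($\alpha,\beta\in\mathbf N^n$), a $K$-basis of $A_n(K)$; $ord_x(x^\alpha\partial^\beta)=|\alpha|$, $ord_\partial(x^\alpha\partial^\beta)=|\beta|$. For $\theta=x^\alpha\partial^\beta$, $\theta'=x^\gamma\partial^\delta$: $\theta\mid\theta'$ if $\alpha\le\gamma$ and $\beta\le\delta$ componentwise, and then $\theta'/\theta:=x^{\gamma-\alpha}\partial^{\delta-\beta}$. Terms are the elements $\theta e_i$ ($\theta\in\Theta$); they form a $K$-basis of $E$, and each nonzero $f$ is uniquely a combination of distinct terms with nonzero coefficients (the terms appearing in $f$). $ord_x(\theta e_i)=ord_x\theta$, $ord_\partial(\theta e_i)=ord_\partial\theta$. For $\theta=x^\alpha\partial^\beta$ and a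 term $w=x^\gamma\partial^\delta e_i$, $\theta w$ denotes the term $x^{\alpha+\gamma}\partial^{\beta+\delta}e_i$; for $f\in E$, $\theta f$ is the module action. $w=\theta'e_i$ is divisible by $v=\theta e_j$ ($v\mid w$) if $i=j$ and $\theta\mid\theta'$; then $w/v:=\theta'/\theta$. Orders: $x^\alpha\partial^\beta<_x x^\gamma\partial^\delta$ iff $(|\alpha|,|\beta|,\alpha,\beta)$ is lexicographically smaller than $(|\gamma|,|\delta|,\gamma,\delta)$; $x^\alpha\partial^\beta<_\partial x^\gamma\partial^\delta$ iff $(|\beta|,|\alpha|,\beta,\alpha)$ is lexicographically smaller than $(|\delta|,|\gamma|,\delta,\gamma)$. On terms, $\theta e_i<\theta'e_j$ iff $\theta<\theta'$, or $\theta=\theta'$ and $i<j$ (for either order). For nonzero $f$, $u_f$ ($x$-leader) and $v_f$ ($\partial$-leader) are the $<_x$-greatest and $<_\partial$-greatest terms appearing in $f$; $lc_x(f)$ is the coefficient of $u_f$. $f$ is $(x,\partial)$-reduced w.r.t. nonzero $g$ if $f$ contains no term $\theta u_g$ ($\theta\in\Theta$) with $ord_\partial(\theta v_g)\le ord_\partial v_f$; reduced w.r.t. a set if reduced w.r.t. each element. One-step reduction: for $g\ne0$, $f\to h$ modulo $g$ if $f$ contains a term $w$ with coefficient $a\neq0$ such that $u_g\mid w$, $ord_\partial((w/u_g)v_g)\le ord_\partial v_f$, and $h=f-a\,lc_x(g)^{-1}(w/u_g)g$. $f$ $(x,\partial)$-reduces to $h$ modulo $G$ if $h$ is obtained from $f$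 by a finite sequence of such one-step reductions with elements of $G$. With $d(f)=ord_\partial v_f-ord_\partial u_f$ for $f\ne0$: a finite set $G$ of nonzero elements of $N$ is an $(x,\partial)$-Gröbner basis of $N$ if for every nonzero $f\in N$ some $g_i\in G$ satisfies $u_{g_i}\mid u_f$ and $d(g_i)\le d(f)$. *)

From HB Require Import structures.
From mathcomp Require Import all_boot all_order all_algebra.
From mathcomp Require Import finmap.
From mathcomp.multinomials Require Import monalg.

Set Implicit Arguments.
Unset Strict Implicit.
Unset Printing Implicit Defensive.

Import Order.TTheory GRing.Theory Num.Theory.
Local Open Scope ring_scope.

Definition expv (n : nat) := n.-tuple nat.
(* Monomials  x^alpha d^beta  of Theta, encoded as (alpha, beta). *)
Definition mon (n : nat) := (expv n * expv n)%type.
(* Terms  x^alpha d^beta e_i  with i : 'I_m (e_1..e_m indexed by 'I_m). *)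
Definition term (n m : nat) := (mon n * 'I_m)%type.

(* The free module E = A_n(K)^m, represented by its K-basis of terms:
   an element is a finitely supported K-valued function on terms. *)
Definition E (K : fieldType) (n m : nat) := {malg K[term n m]}.
(* The Weyl algebra A_n(K), as a K-vector space with basis Theta. *)
Definition weyl (K : fieldType) (n : nat) := {malg K[mon n]}.

Section Weyl.
Variables (K : fieldType) (n m : nat).
Implicit Types (f g h : E K n m) (t u v w : term n m) (th : mon n).

Definition addv (a b : expv n) : expv n := [tuple (tnth a k + tnth b k)%N | k < n].
Definition subv (a b : expv n) : expv n := [tuple (tnth a k - tnth b k)%N | k < n].
Definition unitv (j : 'I_n) : expv n := [tuple (k == j : nat) | k < n].
Definition lev (a b : expv n) : bool := [forall k, (tnth a k <= tnth b k)%N].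
Definition absv (a : expv n) : nat := (\sum_(k < n) tnth a k)%N.

(* Action of the generators x_j and d_j on a basis term x^a d^b e_i,
   using  d_j x^a d^b = x^a d^(b+1_j) + a_j x^(a-1_j) d^b. *)
Definition xgen (j : 'I_n) t : E K n m :=
  << ((addv t.1.1 (unitv j), t.1.2), t.2) >>.
Definition dgen (j : 'I_n) t : E K n m :=
  << ((t.1.1, addv t.1.2 (unitv j)), t.2) >>
  + (tnth t.1.1 j)%:R *: << ((subv t.1.1 (unitv j), t.1.2), t.2) >>.

Definition linext (phi : term n m -> E K n m) f : E K n m :=
  \sum_(t <- msupp f) f@_t *: phi t.

Definition dpow (b : expv n) f : E K n m :=
  foldr (fun j acc => iter (tnth b j) (linext (dgen j)) acc) f (enum 'I_n).
Definition xpow (a : expv n) f : E K n m :=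
  foldr (fun j acc => iter (tnth a j) (linext (xgen j)) acc) f (enum 'I_n).

Definition mact th f : E K n m := xpow th.1 (dpow th.2 f).

Definition wact (P : weyl K n) f : E K n m :=
  \sum_(th <- msupp P) P@_th *: mact th f.

Definition is_submodule (N : E K n m -> Prop) : Prop :=
  [/\ N 0, (forall f g, N f -> N g -> N (f + g))
    & (forall (P : weyl K n) f, N f -> N (wact P f))].

Definition ordx t : nat := absv t.1.1.
Definition ordd t : nat := absv t.1.2.

Definition tmul th t : term n m := ((addv th.1 t.1.1, addv th.2 t.1.2), t.2).
Definition tdvd v w : bool := [&& v.2 == w.2, lev v.1.1 w.1.1 & lev v.1.2 w.1.2].
Definition tquot w v : mon n := (subv w.1.1 v.1.1, subv w.1.2 v.1.2).

Fixpoint lexlt (s1 s2 : seq nat) : bool :=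
  match s1, s2 with
  | x :: s, y :: s' => (x < y)%N || ((x == y) && lexlt s s')
  | [::], _ :: _ => true
  | _, _ => false
  end.

Definition xkey t : seq nat :=
  [:: ordx t; ordd t] ++ tval t.1.1 ++ tval t.1.2 ++ [:: nat_of_ord t.2].
Definition dkey t : seq nat :=
  [:: ordd t; ordx t] ++ tval t.1.2 ++ tval t.1.1 ++ [:: nat_of_ord t.2].

Definition xlt t t' : bool := lexlt (xkey t) (xkey t').
Definition dlt t t' : bool := lexlt (dkey t) (dkey t').

Definition is_xlead f u : Prop :=
  u \in msupp f /\ forall t, t \in msupp f -> t != u -> xlt t u.
Definition is_dlead f v : Prop :=
  v \in msupp f /\ forall t, t \in msupp f -> t != v -> dlt t v.

Definition xd_reduced f g : Prop :=
  forall ug vg vf, is_xlead g ug -> is_dlead g vg -> is_dlead f vf ->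
    ~ exists th, tmul th ug \in msupp f /\ (ordd (tmul th vg) <= ordd vf)%N.

Definition xd_reduced_set f (G : seq (E K n m)) : Prop :=
  forall g, g \in G -> xd_reduced f g.

Definition xd_step g f h : Prop :=
  g != 0 /\
  exists ug vg vf w, [/\ is_xlead g ug, is_dlead g vg & is_dlead f vf] /\
    [/\ w \in msupp f, tdvd ug w,
    (ordd (tmul (tquot w ug) vg) <= ordd vf)%N &
    h = f - (f@_w * (g@_ug)^-1) *: mact (tquot w ug) g].

Inductive xd_reduces (G : seq (E K n m)) : E K n m -> E K n m -> Prop :=
  | xd_red_refl f : xd_reduces G f f
  | xd_red_step f f' h g : g \in G -> xd_step g f f' -> xd_reduces G f' h ->
      xd_reduces G f h.

Definition dval u v : int := (ordd v)%:Z - (ordd u)%:Z.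

Definition is_xd_groebner (N : E K n m -> Prop) (G : seq (E K n m)) : Prop :=
  (forall g, g \in G -> g != 0 /\ N g) /\
  forall f, N f -> f != 0 ->
    exists2 g, g \in G &
      forall ug vg uf vf, is_xlead g ug -> is_dlead g vg ->
        is_xlead f uf -> is_dlead f vf ->
        tdvd ug uf /\ (dval ug vg <= dval uf vf)%R.

End Weyl.

(* Acting by a monomial theta moves the x-leader u_f of f to theta u_f without
   changing its coefficient: x_j maps a term w to x_j w, d_j maps it to d_j w
   plus a multiple of a term of smaller x-order, and <_x is compatible with
   multiplication of terms.  So if u_g | u_f and d(g) <= d(f), subtracting the
   right multiple of (u_f/u_g) g is an admissible reduction step that stays in
   N and strictly lowers the x-leader; as <_x is well-founded, every element of
   N reduces to 0.  Conversely, reduction only subtracts elements of N, and a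
   nonzero reduced f in N would contradict the Groebner property at u_f. *)

From Pilot Require Import Defs.
From mathcomp Require Import all_boot all_order all_algebra finmap.
From mathcomp.multinomials Require Import monalg.
From mathcomp Require Import zify.
From Stdlib Require Import Wellfounded.

Set Implicit Arguments.
Unset Strict Implicit.
Unset Printing Implicit Defensive.

Import Order.TTheory GRing.Theory.
(* Re-import so that [addv] denotes exponent-vector addition again, not the sum
   of vector spaces from all_algebra. *)
Import Defs.


Lemma lexltE (s t : seq nat) : lexlt s t = (s < t :> seqlexi nat)%O.
Proof.
by elim: s t => [|x s IH] [|y t] //=; rewrite ltxi_cons IH !leEnat; case: ltngtP.
Qed.

Definition lexlt_eqsize (s t : seq nat) := size s = size t /\ lexlt s t.

Lemma Acc_lexlt_eqsize k s : size s = k -> Acc lexlt_eqsize s.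
Proof.
elim: k s => [|k IHk] [|x s] sz_s; [by constructor=> -[|? ?] [] | by [] | by [] |].
case: sz_s => sz_s.
have accs := IHk s sz_s; elim/ltn_ind: x s sz_s accs => x IHx s sz_s accs.
elim: accs sz_s => {}s _ IHs sz_s.
constructor=> -[|y a] [sz_ya]; first by [].
case: sz_ya => sz_a /orP[lt_yx | /andP[/eqP-> lt_as]].
  by apply: IHx; [| rewrite sz_a | apply: IHk; rewrite sz_a].
by apply: IHs; [split | rewrite sz_a].
Qed.

Lemma lexlt_eqsize_wf : well_founded lexlt_eqsize.
Proof. by move=> s; apply: Acc_lexlt_eqsize. Qed.

Definition addseq (s d : seq nat) := [seq p.1 + p.2 | p <- zip s d]%N.

Lemma addseq_cat s s' d d' : size s = size d ->
  addseq (s ++ s') (d ++ d') = addseq s d ++ addseq s' d'.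
Proof. by move=> sz; rewrite /addseq zip_cat // map_cat. Qed.

Lemma lexlt_addseq s t d : size s = size d -> size t = size d ->
  lexlt s t -> lexlt (addseq s d) (addseq t d).
Proof.
elim: s t d => [|x s IH] [|y t] [|e d] //= [sz_s] [sz_t].
rewrite ltn_add2r eqn_add2r => /orP[-> // | /andP[-> /(IH _ _ sz_s sz_t)->]].
by rewrite orbT.
Qed.

Lemma exists_key_max (T : eqType) (key : T -> seq nat) (s : seq T) :
  injective key -> s != [::] ->
  exists2 u, u \in s & forall t, t \in s -> t != u -> lexlt (key t) (key u).
Proof.
move=> key_inj; elim: s => [//|x s IH] _.
have [-> | /IH[u us hu]] := eqVneq s [::].
  by exists x; rewrite ?mem_head // => t; rewrite inE => ->.
have [lt_xu | le_ux] := ltP (key x : seqlexi nat) (key u).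
  exists u => [|t]; first by rewrite inE us orbT.
  by rewrite inE => /orP[/eqP-> _ | /hu]; rewrite ?lexltE.
exists x => [|t]; first exact: mem_head.
rewrite inE lexltE => /orP[/eqP-> /eqP // | ts tx].
have [etu | tu] := eqVneq t u; last by rewrite (lt_le_trans _ le_ux) -?lexltE ?hu.
rewrite etu lt_neqAle le_ux andbT (inj_eq key_inj).
by apply: contraNneq tx => <-; rewrite etu.
Qed.

Section ExponentVectors.
Variable n : nat.
Implicit Types a b : expv n.

Definition zerov : expv n := [tuple 0%N | _ < n].

Lemma tnth_addv a b i : tnth (addv a b) i = (tnth a i + tnth b i)%N.
Proof. by rewrite tnth_mktuple. Qed.

Lemma tnth_subv a b i : tnth (subv a b) i = (tnth a i - tnth b i)%N.
Proof. by rewrite tnth_mktuple. Qed.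

Lemma tnth_unitv (j i : 'I_n) : tnth (unitv j) i = (i == j) :> nat.
Proof. by rewrite tnth_mktuple. Qed.

Lemma addv0 a : addv a zerov = a.
Proof. by apply: eq_from_tnth => i; rewrite tnth_addv tnth_mktuple addn0. Qed.

Lemma addv_subv a b : lev b a -> addv (subv a b) b = a.
Proof.
by move=> /forallP le_ba; apply: eq_from_tnth => i; rewrite tnth_addv tnth_subv subnK.
Qed.

Lemma tval_addv a b : tval (addv a b) = addseq a b.
Proof.
apply: (@eq_from_nth _ 0%N) => [|i]; rewrite /addseq size_tuple.
  by rewrite size_map size_zip !size_tuple minnn.
move=> lt_in; rewrite (nth_map (0, 0)%N) ?nth_zip ?size_zip ?size_tuple ?minnn //.
by have := tnth_addv a b (Ordinal lt_in); rewrite !(tnth_nth 0%N).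
Qed.

Lemma absv_addv a b : absv (addv a b) = (absv a + absv b)%N.
Proof. by rewrite /absv -big_split; apply: eq_bigr => i _; rewrite tnth_addv. Qed.

Lemma absv_subv a b : lev b a -> absv (subv a b) = (absv a - absv b)%N.
Proof. by move=> le_ba; rewrite -{2}(addv_subv le_ba) absv_addv addnK. Qed.

Lemma absv_unitv (j : 'I_n) : absv (unitv j) = 1%N.
Proof.
rewrite /absv (bigD1 j) //= big1 ?tnth_unitv ?eqxx // => i /negPf.
by rewrite tnth_unitv => ->.
Qed.

Lemma lev_absv a b : lev b a -> (absv b <= absv a)%N.
Proof. by move=> /forallP le_ba; apply: leq_sum. Qed.

Lemma lev_unitv (j : 'I_n) a : (0 < tnth a j)%N -> lev (unitv j) a.
Proof. by move=> a_j; apply/forallP => i; rewrite tnth_unitv; case: eqP => [->|]. Qed.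

Lemma tnth_iter_addv k (j i : 'I_n) a :
  tnth (iter k (fun c => addv c (unitv j)) a) i = (tnth a i + k * (i == j))%N.
Proof. by elim: k => [|k IH] /=; rewrite ?tnth_addv ?IH ?tnth_unitv; lia. Qed.

Lemma foldr_iter_addv b a :
  foldr (fun j acc => iter (tnth b j) (fun c => addv c (unitv j)) acc) a (enum 'I_n)
  = addv b a.
Proof.
suff tnth_foldr l i :
    tnth (foldr (fun j acc => iter (tnth b j) (fun c => addv c (unitv j)) acc) a l) i
    = (tnth a i + count_mem i l * tnth b i)%N.
  apply: eq_from_tnth => i; rewrite tnth_foldr tnth_addv addnC.
  by rewrite count_uniq_mem ?enum_uniq ?mem_enum ?mul1n.
elim: l => [|j l IH] /=; rewrite ?tnth_iter_addv ?IH; first lia.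
by have [->|_] := eqVneq i j => /=; lia.
Qed.

End ExponentVectors.

Lemma foldr_iter_morph (I A B : Type) (F : A -> B) (f : I -> A -> A)
    (g : I -> B -> B) (k : I -> nat) (l : seq I) (x : A) :
  (forall j y, F (f j y) = g j (F y)) ->
  F (foldr (fun j acc => iter (k j) (f j) acc) x l)
  = foldr (fun j acc => iter (k j) (g j) acc) (F x) l.
Proof. by move=> Ffg; elim: l => //= j l <-; elim: (k j) => //= p <-. Qed.

Section TermOrders.
Variables n m : nat.
Implicit Types (t u : term n m) (a b : expv n).

Definition tshift a b t : term n m := ((addv t.1.1 a, addv t.1.2 b), t.2).

Lemma key_inj (p q p' q' : nat) a b a' b' (i i' : nat) :
  [:: p; q] ++ tval a ++ tval b ++ [:: i] = [:: p'; q'] ++ tval a' ++ tval b' ++ [:: i'] ->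
  [/\ a = a', b = b' & i = i'].
Proof.
case=> _ _ /eqP; rewrite eqseq_cat ?size_tuple // eqseq_cat ?size_tuple //.
by case/and3P => /eqP/val_inj-> /eqP/val_inj-> /eqP[->].
Qed.

Lemma xkey_inj : injective (@xkey n m).
Proof. by move=> [[a b] i] [[a' b'] i'] /key_inj[/= -> -> /val_inj->]. Qed.

Lemma dkey_inj : injective (@dkey n m).
Proof. by move=> [[a b] i] [[a' b'] i'] /key_inj[/= -> -> /val_inj->]. Qed.

Lemma size_xkey t : size (xkey t) = (n + n).+3.
Proof. by rewrite /xkey !size_cat !size_tuple /=; lia. Qed.

Lemma xltE t t' : xlt t t' = (xkey t < xkey t' :> seqlexi nat)%O.
Proof. exact: lexltE. Qed.

Lemma xlt_irr t : xlt t t = false.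
Proof. by rewrite xltE ltxx. Qed.

Lemma xlt_trans t1 t2 t3 : xlt t1 t2 -> xlt t2 t3 -> xlt t1 t3.
Proof. rewrite !xltE; exact: lt_trans. Qed.

Lemma xlt_wf : well_founded (@xlt n m).
Proof.
apply: (Inclusion.wf_incl _ _ (fun t t' => lexlt_eqsize (xkey t) (xkey t'))).
  by move=> t t' lt_tt'; split; rewrite ?size_xkey.
exact: Inverse_Image.wf_inverse_image lexlt_eqsize_wf.
Qed.

Lemma xkey_tshift a b t :
  xkey (tshift a b t) = addseq (xkey t) ([:: absv a; absv b] ++ tval a ++ tval b ++ [:: 0%N]).
Proof.
rewrite /xkey /ordx /ordd /= !absv_addv !tval_addv.
rewrite [RHS]/addseq /= -[map _ (zip (tval _ ++ _) _)]/(addseq _ _).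
by rewrite !addseq_cat ?size_tuple // [addseq [:: _] _]/addseq /= addn0.
Qed.

Lemma xlt_tshift a b t t' : xlt t t' -> xlt (tshift a b t) (tshift a b t').
Proof.
rewrite /xlt !xkey_tshift => lt_tt'.
by apply: lexlt_addseq lt_tt'; rewrite size_xkey !size_cat !size_tuple /=; lia.
Qed.

Lemma xlt_dgen_lower (j : 'I_n) t : (0 < tnth t.1.1 j)%N ->
  xlt ((subv t.1.1 (unitv j), t.1.2), t.2) (tshift (zerov n) (unitv j) t).
Proof.
move=> t_j; have lt0 : (0 < absv t.1.1)%N.
  by rewrite /absv (bigD1 j) //= (leq_trans t_j (leq_addr _ _)).
rewrite /xlt /xkey /ordx /= absv_subv ?lev_unitv // absv_unitv addv0 /=.
by apply/orP; left; lia.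
Qed.

Lemma ordd_tmul (th : mon n) t : ordd (tmul th t) = (absv th.2 + ordd t)%N.
Proof. by rewrite /ordd absv_addv. Qed.

Lemma tmul_tquot u w : tdvd u w -> tmul (tquot w u) u = w.
Proof.
by case: w => [[a b] i] /and3P[/eqP/= <- le_a le_b]; rewrite /tmul /tquot /= !addv_subv.
Qed.

Lemma ordd_tquot_le (ug vg uf vf : term n m) : tdvd ug uf ->
  (dval ug vg <= dval uf vf)%R -> (ordd (tmul (tquot uf ug) vg) <= ordd vf)%N.
Proof.
case/and3P => _ _ le_b; rewrite /dval ordd_tmul /tquot /= absv_subv //.
by have := lev_absv le_b; rewrite -/(ordd uf) -/(ordd ug); lia.
Qed.

End TermOrders.

Section Leaders.
Variables (K : fieldType) (n m : nat).
Local Open Scope ring_scope.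
Implicit Types (f g h : E K n m) (t u : term n m) (c : K).

Lemma msupp_neq_nil f : f != 0 -> (msupp f : seq (term n m)) != [::].
Proof.
apply: contra => /eqP supp0; apply/eqP/malgP => t.
by rewrite mcoeff0 mcoeff_outdom // -[t \in _]/(t \in (msupp f : seq _)) supp0.
Qed.

Lemma xlead_exists f : f != 0 -> exists u, is_xlead f u.
Proof.
by case/msupp_neq_nil/(exists_key_max (@xkey_inj n m)) => u ? ?; exists u.
Qed.

Lemma dlead_exists f : f != 0 -> exists v, is_dlead f v.
Proof.
by case/msupp_neq_nil/(exists_key_max (@dkey_inj n m)) => v ? ?; exists v.
Qed.

(* Unlike [is_xlead f u], this allows [c = 0], which makes it stable under [linext]. *)
Definition xtop f u c := forall t, ~~ xlt t u -> f@_t = if t == u then c else 0.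

Lemma xlead_xtop f u : is_xlead f u -> xtop f u f@_u.
Proof.
move=> [_ below_u] t; case: eqP => [-> // | /eqP tu] not_below.
by apply: mcoeff_outdom; apply: contra not_below => /below_u; apply.
Qed.

Lemma xtop_msupp f u c t : xtop f u c -> t \in msupp f -> t != u -> xlt t u.
Proof.
move=> top_f tf tu; apply/negPn/negP => not_below.
by move: tf; rewrite -mcoeff_neq0 top_f // (negPf tu) eqxx.
Qed.

Lemma xtop_cancel f g u a b : xtop f u a -> xtop g u b -> b != 0 ->
  forall t, t \in msupp (f - (a / b) *: g) -> xlt t u.
Proof.
move=> top_f top_g b0 t; apply: contraTT => not_below.
rewrite -mcoeff_neq0 negbK mcoeffB mcoeffZ top_f // top_g //.
by case: (t == u); rewrite ?divfK ?mulr0 ?subrr.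
Qed.

Lemma big_seq_single (R : nmodType) (I : eqType) (r : seq I) (F : I -> R) i :
  uniq r -> (forall j, j \in r -> j != i -> F j = 0) -> (i \notin r -> F i = 0) ->
  \sum_(j <- r) F j = F i.
Proof.
move=> r_uniq F0 Fi0; have [ir | ir] := boolP (i \in r).
  rewrite (bigD1_seq i) //= big_seq_cond big1 ?addr0 // => j /andP[]; exact: F0.
rewrite Fi0 // big_seq big1 // => j jr; apply: F0 => //.
by apply: contraNneq ir => <-.
Qed.

Lemma xtop_linext (phi : term n m -> E K n m) (s : term n m -> term n m) f u c :
  (forall t, xtop (phi t) (s t) 1) -> {homo s : t t' / xlt t t'} ->
  xtop f u c -> xtop (linext phi f) (s u) c.
Proof.
move=> top_phi s_mono top_f t' not_below.
rewrite /linext raddf_sum /= (@big_seq_single _ _ _ _ u) ?fset_uniq //.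
- by rewrite mcoeffZ top_phi // top_f ?xlt_irr ?eqxx //; case: eqP; rewrite ?mulr1 ?mulr0.
- move=> t tf tu; have /s_mono lt_st := xtop_msupp top_f tf tu.
  rewrite mcoeffZ top_phi; last by apply: contra not_below => /xlt_trans; apply.
  case: eqP => [t's | _]; last by rewrite mulr0.
  by move: not_below; rewrite t's lt_st.
- by move=> /mcoeff_outdom uf; rewrite mcoeffZ uf mul0r.
Qed.

Lemma xtop_foldr_iter (I : Type) (phi : I -> term n m -> E K n m)
    (s : I -> term n m -> term n m) (k : I -> nat) (l : seq I) f u c :
  (forall j t, xtop (phi j t) (s j t) 1) -> (forall j, {homo s j : t t' / xlt t t'}) ->
  xtop f u c ->
  xtop (foldr (fun j acc => iter (k j) (linext (phi j)) acc) f l)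
       (foldr (fun j acc => iter (k j) (s j) acc) u l) c.
Proof.
move=> top_phi s_mono top_f; elim: l => //= j l IH.
by elim: (k j) => //= p; apply: xtop_linext.
Qed.

End Leaders.

Section ModuleAction.
Variables (K : fieldType) (n m : nat).
Local Open Scope ring_scope.
Implicit Types (f : E K n m) (t u : term n m) (c : K).

Lemma xtop_xgen j t : xtop (xgen K j t) (tshift (unitv j) (zerov n) t) 1.
Proof. by rewrite /xgen /tshift addv0 => t' _; rewrite mcoeffU eq_sym; case: eqP. Qed.

Lemma mcoeff_dgen j t t' : (dgen K j t)@_t' = (tshift (zerov n) (unitv j) t == t')%:R
  + (tnth t.1.1 j)%:R * (((subv t.1.1 (unitv j), t.1.2), t.2) == t')%:R.
Proof.
rewrite /dgen mcoeffD mcoeffZ; congr (_ + _ * _); last exact: mcoeffU.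
by rewrite /tshift addv0; exact: mcoeffU.
Qed.

Lemma xtop_dgen j t : xtop (dgen K j t) (tshift (zerov n) (unitv j) t) 1.
Proof.
move=> t' not_below; rewrite mcoeff_dgen.
have [-> | t_j] := posnP (tnth t.1.1 j); first by rewrite mul0r addr0 eq_sym; case: eqP.
have [lower_t' | _] := eqVneq ((subv t.1.1 (unitv j), t.1.2), t.2) t'.
  by move: not_below; rewrite -lower_t' xlt_dgen_lower.
by rewrite mulr0 addr0 eq_sym; case: eqP.
Qed.

Lemma xtop_dpow b f u c : xtop f u c -> xtop (dpow b f) ((u.1.1, addv b u.1.2), u.2) c.
Proof.
case: u => [[a b'] i] top_f.
have := xtop_foldr_iter (k := tnth b) (l := enum 'I_n) xtop_dgen
  (fun j => @xlt_tshift _ _ _ _) top_f.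
rewrite -(foldr_iter_morph (F := fun x => ((a, x), i)) (f := fun j x => addv x (unitv j))).
  by rewrite foldr_iter_addv.
by move=> j x; rewrite /tshift addv0.
Qed.

Lemma xtop_xpow a f u c : xtop f u c -> xtop (xpow a f) ((addv a u.1.1, u.1.2), u.2) c.
Proof.
case: u => [[a' b] i] top_f.
have := xtop_foldr_iter (k := tnth a) (l := enum 'I_n) xtop_xgen
  (fun j => @xlt_tshift _ _ _ _) top_f.
rewrite -(foldr_iter_morph (F := fun x => ((x, b), i)) (f := fun j x => addv x (unitv j))).
  by rewrite foldr_iter_addv.
by move=> j x; rewrite /tshift addv0.
Qed.

Lemma xtop_mact (th : mon n) f u c : xtop f u c -> xtop (mact th f) (tmul th u) c.
Proof. by move=> top_f; apply: (xtop_xpow (a := th.1) (xtop_dpow (b := th.2) top_f)). Qed.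

End ModuleAction.

Section Reduction.
Variables (K : fieldType) (n m : nat) (N : E K n m -> Prop) (G : seq (E K n m)).
Hypotheses (N_submod : is_submodule N) (G_groebner : is_xd_groebner N G).
Local Open Scope ring_scope.
Implicit Types (f g h : E K n m) (t u : term n m).

Lemma wact_scale_monomial (c : K) (th : mon n) f : wact (c *: << th >>) f = c *: mact th f.
Proof.
have [->|c0] := eqVneq c 0; first by rewrite scale0r /wact msupp0 big_seq_fset0 scale0r.
by rewrite /wact msuppZ (negPf c0) msuppU oner_eq0 big_seq_fset1 mcoeffZ mcoeffUU mulr1.
Qed.

Lemma submodule_addZ_mact f g (c : K) (th : mon n) :
  N f -> N g -> N (f + c *: mact th g).
Proof.
case: N_submod => _ N_add N_wact Nf Ng.
by apply: N_add Nf _; rewrite -wact_scale_monomial; apply: N_wact.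
Qed.

Lemma groebner_divisor f uf vf : N f -> f != 0 -> is_xlead f uf -> is_dlead f vf ->
  exists g ug vg, [/\ g \in G, is_xlead g ug, is_dlead g vg, tdvd ug uf
    & (ordd (tmul (tquot uf ug) vg) <= ordd vf)%N].
Proof.
move=> Nf f0 xlead_f dlead_f; have [g gG div_g] := G_groebner.2 f Nf f0.
have [g0 _] := G_groebner.1 g gG.
have [ug xlead_g] := xlead_exists g0; have [vg dlead_g] := dlead_exists g0.
have [ug_uf le_d] := div_g ug vg uf vf xlead_g dlead_g xlead_f dlead_f.
by exists g, ug, vg; split; rewrite ?ordd_tquot_le.
Qed.

Lemma xd_step_lowers f uf : N f -> is_xlead f uf ->
  exists g h, [/\ g \in G, xd_step g f h, N h & forall t, t \in msupp h -> xlt t uf].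
Proof.
move=> Nf xlead_f.
have f0 : f != 0 by apply: contraTneq xlead_f.1 => ->; rewrite msupp0 inE.
have [vf dlead_f] := dlead_exists f0.
have [g [ug [vg [gG xlead_g dlead_g ug_uf le_ord]]]] := groebner_divisor Nf f0 xlead_f dlead_f.
have [g0 Ng] := G_groebner.1 g gG.
exists g, (f - (f@_uf / g@_ug) *: mact (tquot uf ug) g); split=> //.
- by split=> //; exists ug, vg, vf, uf; split=> //; split=> //; case: xlead_f.
- by rewrite -scaleNr; apply: submodule_addZ_mact.
- apply: xtop_cancel (xlead_xtop xlead_f) _ _; last by rewrite mcoeff_neq0; case: xlead_g.
  by rewrite -{2}(tmul_tquot ug_uf); apply/xtop_mact/xlead_xtop.
Qed.

Lemma groebner_reduces_to_0 f : N f -> xd_reduces G f 0.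
Proof.
suff reduce u : forall f, N f -> is_xlead f u -> xd_reduces G f 0.
  have [-> _ | /xlead_exists[u xlead_f] Nf] := eqVneq f 0; first exact: xd_red_refl.
  exact: reduce xlead_f.
elim/(well_founded_ind (@xlt_wf n m)): u => u IH {}f Nf xlead_f.
have [g [h [gG step Nh below_u]]] := xd_step_lowers Nf xlead_f.
apply: xd_red_step gG step _; have [-> | /xlead_exists[uh xlead_h]] := eqVneq h 0.
  exact: xd_red_refl.
exact: IH (below_u _ xlead_h.1) h Nh xlead_h.
Qed.

Lemma xd_reduces_mem f h : xd_reduces G f h -> N h -> N f.
Proof.
elim=> // {}f f' {}h g gG [_ [ug [_ [_ [w [_ [_ _ _ ->]]]]]]] _ IH /IH Nf'.
rewrite -(subrK (f@_w / g@_ug *: mact (tquot w ug) g) f).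
by apply: submodule_addZ_mact => //; case: (G_groebner.1 g gG).
Qed.

End Reduction.

Theorem theorem4p8 (K : fieldType) (charK0 : [pchar K]%R =i pred0) (n m : nat)
    (N : E K n m -> Prop) (G : seq (E K n m)) :
  is_submodule N -> is_xd_groebner N G ->
  (forall f : E K n m, N f <-> xd_reduces G f 0%R) /\
  (forall f : E K n m, N f -> xd_reduced_set f G -> f = 0%R).
Proof.
move=> N_submod G_groebner; split=> [f | f Nf f_reduced].
  split=> [|red_f]; first exact: groebner_reduces_to_0.
  by apply: (xd_reduces_mem N_submod G_groebner red_f); case: N_submod.
apply/eqP/negP => /negP f0.
have [uf xlead_f] := xlead_exists f0; have [vf dlead_f] := dlead_exists f0.
have [g [ug [vg [gG xlead_g dlead_g ug_uf le_ord]]]] :=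
  groebner_divisor G_groebner Nf f0 xlead_f dlead_f.
apply: (f_reduced g gG ug vg vf xlead_g dlead_g dlead_f).
by exists (tquot uf ug); rewrite tmul_tquot //; case: xlead_f.
Qed.
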